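(* Let $s,t,z$ be positive integers and put $\theta'=t(2s-1)$, $\tau=\theta'-ts-t$, $p=\min\{\lfloor\frac{z-1}{ts-t}\rfloor,t-1\}$ and $p'=\min\{\lfloor\frac{z-1}{\tau-z+1}\rfloor,t-1\}$. Define the coded exponent sets $$\mathbf{P}(C_A)=\{i+tj: i\in\{0,\dots,t-1\},\ j\in\{0,\dots,s-1\}\},\qquad \mathbf{P}(C_B)=\{t(s-1-k)+\theta' l: k\in\{0,\dots,s-1\},\ l\in\{0,\dots,t-1\}\}.$$ Define the secret exponent set $\mathbf{P}(S_A)$ by: - if $z>ts-t$ and $s,t\neq 1$: $\mathbf{P}(S_A)=\{ts+\theta' l+w: l\in\{0,\dots,p-1\},\ w\in\{0,\dots,t(s-1)-1\}\}\cup\{ts+\theta' p+u: u\in\{0,\dots,z-1-pt(s-1)\}\}$; - if $z\le ts-t$ or $t=1$ or $s=1$: $\mathbf{P}(S_A)=\{ts+\theta' p+u: u\in\{0,\dots,z-1\}\}$. Define the secret exponent set $\mathbf{P}(S_B)$ by: - if $z>\tau$ or $t=1$ or $s=1$: $\mathbf{P}(S_B)=\{ts+\theta'(t-1)+r: r\in\{0,\dots,z-1\}\}$; - if $\frac{\tau+1}{2}<z\le\tau$ and $s,t\neq1$: $\mathbf{P}(S_B)=\{ts+\theta' l'+d: d\in\{0,\dots,\tau-z\},\ l'\in\{0,\dots,p'-1\}\}\cup\{ts+\theta' p'+v: v\in\{0,\dots,z-1-p'(\tau-z+1)\}\}$; - if $z\le\frac{\tau+1}{2}$ and $s,t\neq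 1$: $\mathbf{P}(S_B)=\{ts+v: v\in\{0,\dots,z-1\}\}$. Then for all $i,l\in\{0,\dots,t-1\}$, the integer $i+t(s-1)+tl(2s-1)$ belongs to none of the sumsets $\mathbf{P}(S_A)+\mathbf{P}(C_B)$, $\mathbf{P}(S_A)+\mathbf{P}(S_B)$, $\mathbf{P}(S_B)+\mathbf{P}(C_A)$.
   Context: For integer sets $\mathbf{I},\mathbf{J}$, $\mathbf{I}+\mathbf{J}=\{i+j:i\in\mathbf{I},j\in\mathbf{J}\}$. These sets are the sets of exponents with nonzero coefficient of the polynomials of the PolyDot-CMPC scheme for privately computing $Y=A^TB$ for $m\times m$ matrices $A,B$ over a finite field split into $s$ row-wise and $t$ column-wise blocks: source 1 forms $F_A(x)=C_A(x)+S_A(x)$ with $C_A(x)=\sum_{i=0}^{t-1}\sum_{j=0}^{s-1}A_{i,j}x^{i+tj}$ (blocks $A_{i,j}$ of $A^T$) and $S_A(x)$ the sum of independent uniformly random matrices $\bar A$ times $x^e$ for $e\in\mathbf{P}(S_A)$; source 2 forms $F_B(x)=C_B(x)+S_B(x)$ with $C_B(x)=\sum_{k=0}^{s-1}\sum_{l=0}^{t-1}B_{k,l}x^{t(s-1-k)+\theta' l}$ and $S_B(x)$ likewise a sum of uniformly random matrices times $x^e$, $e\in\mathbf{P}(S_B)$. The exponents $i+t(s-1)+tl(2s-1)$ are those whose coefficients in $C_A(x)C_B(x)$ are the blocks $Y_{i,l}=\sum_j A_{i,j}B_{j,l}$ of $Y$; $z$ is the number of colluding workers. When $s=1$ (so $ts-t=0$)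 the paper takes $p=t-1$. *)

From mathcomp Require Import all_boot.
Set Implicit Arguments. Unset Strict Implicit. Unset Printing Implicit Defensive.

Definition theta' (s t : nat) : nat := t * (2 * s - 1).
(* tau = theta' - ts - t  (only used when s, t >= 2, where it is >= 0) *)
Definition tau (s t : nat) : nat := theta' s t - t * s - t.
(* p = min(floor((z-1)/(ts-t)), t-1), and p = t-1 when s = 1 (ts - t = 0) *)
Definition pA (s t z : nat) : nat :=
  if s == 1 then t - 1 else minn ((z - 1) %/ (t * s - t)) (t - 1).
Definition pB (s t z : nat) : nat :=
  minn ((z - 1) %/ (tau s t - z + 1)) (t - 1).

Definition PCA (s t : nat) (e : nat) : Prop :=
  exists i j, i < t /\ j < s /\ e = i + t * j.
Definition PCB (s t : nat) (e : nat) : Prop :=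
  exists k l, k < s /\ l < t /\ e = t * (s - 1 - k) + theta' s t * l.

Definition PSA (s t z : nat) (e : nat) : Prop :=
  let p := pA s t z in
  if [&& t * s - t < z, s != 1 & t != 1] then
    (exists l w, l < p /\ w < t * (s - 1) /\ e = t * s + theta' s t * l + w)
    \/ (exists u, u <= z - 1 - p * t * (s - 1) /\ e = t * s + theta' s t * p + u)
  else exists u, u <= z - 1 /\ e = t * s + theta' s t * p + u.

Definition PSB (s t z : nat) (e : nat) : Prop :=
  let p' := pB s t z in
  if [|| tau s t < z, t == 1 | s == 1] then
    exists r, r <= z - 1 /\ e = t * s + theta' s t * (t - 1) + r
  else if tau s t + 1 < 2 * z then
    (exists d l', d <= tau s t - z /\ l' < p' /\ e = t * s + theta' s t * l' + d)
    \/ (exists v, v <= z - 1 - p' * (tau s t - z + 1) /\ e = t * s + theta' s t * p' + v)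
  else
    exists v, v <= z - 1 /\ e = t * s + v.

Definition in_sumset (X Y : nat -> Prop) (n : nat) : Prop :=
  exists a b, X a /\ Y b /\ n = a + b.

From mathcomp Require Import all_boot zify.

(* Put theta = theta' s t = 2ts - t.  The product exponent
   i + t(s-1) + tl(2s-1) is theta * l + rho with ts - t <= rho < ts, and it
   lies below ts + theta (t-1).  Every element of the three sumsets is either
   at least ts + theta (t-1), or of the form theta * q + r with
   ts <= r < theta + (ts - t): the secret exponents of S_A have residue in
   [ts, theta), those of S_B in [ts, theta - t - z], the coded exponents of
   C_A and C_B contribute less than ts, resp. at most ts - t, and for the
   sumset P(S_A) + P(S_B) the exponents of S_A are below ts + z.  Since
   rho < r < theta + rho, such a number is never congruent to rho modulo
   theta. *)

Set Implicit Arguments.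
Unset Strict Implicit.
Unset Printing Implicit Defensive.

Lemma mulnBr1 m n : m * (n - 1) = m * n - m.
Proof. by rewrite mulnBr muln1. Qed.

Lemma theta'E s t : theta' s t = 2 * (t * s) - t.
Proof. by rewrite /theta' mulnBr1 mulnCA. Qed.

Lemma product_exponentE s t i l :
  i + t * (s - 1) + t * l * (2 * s - 1) = theta' s t * l + (i + (t * s - t)).
Proof. rewrite /theta' mulnAC mulnBr1; lia. Qed.

Lemma mul_add_neq_window d q1 q2 r rho :
  rho < r -> r < d + rho -> d * q1 + r <> d * q2 + rho.
Proof.
move=> lt_rho_r lt_r_drho; case: (leqP q2 q1) => [le_q | lt_q].
  have : d * q2 <= d * q1 by rewrite leq_mul2l le_q orbT.
  lia.
have : d * q1 + d <= d * q2 by rewrite addnC -mulnS leq_mul2l lt_q orbT.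
lia.
Qed.

Section Exponents.

Variables s t : nat.
Hypotheses (s_gt0 : 0 < s) (t_gt0 : 0 < t).

Local Notation th := (theta' s t).

Let ts_ge_t : t <= t * s := leq_pmulr t s_gt0.
Let thE : th = 2 * (t * s) - t := theta'E s t.

Definition clear_of_products (x : nat) : Prop :=
  t * s + th * (t - 1) <= x \/
  exists q r, x = th * q + r /\ t * s <= r < th + (t * s - t).

Lemma product_exponent_not_clear i l : i < t -> l < t ->
  ~ clear_of_products (i + t * (s - 1) + t * l * (2 * s - 1)).
Proof.
rewrite product_exponentE => lt_i lt_l [top | [q [r [eq_qr r_win]]]].
  have : th * l <= th * (t - 1) by rewrite leq_mul2l; lia.
  lia.
by apply: mul_add_neq_window (esym eq_qr); lia.
Qed.

Lemma PCA_lt c : PCA s t c -> c < t * s.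
Proof.
case=> i [j [lt_i [lt_j ->]]].
have : t * j <= t * s - t by rewrite -mulnBr1 leq_mul2l; lia.
lia.
Qed.

Lemma PCB_residue b : PCB s t b -> exists q r, b = th * q + r /\ r <= t * s - t.
Proof.
case=> k [l [lt_k [lt_l ->]]]; exists l, (t * (s - 1 - k)); split; first lia.
by rewrite -mulnBr1 leq_mul2l; lia.
Qed.

Variable z : nat.
Hypothesis z_gt0 : 0 < z.

Lemma PSA_small a : z <= t * s - t -> PSA s t z a -> t * s <= a < t * s + z.
Proof.
move=> small; rewrite /PSA /pA.
have s_neq1 : s != 1 by apply: contraTneq small => ->; lia.
rewrite ltnNge small (negbTE s_neq1) divn_small ?min0n; last lia.
by case=> u [le_u ->]; lia.
Qed.

Lemma PSA_residue a : PSA s t z a ->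
  t * s + th * (t - 1) <= a \/ exists q r, a = th * q + r /\ t * s <= r < th.
Proof.
move=> PSA_a; have [small | big] := leqP z (t * s - t).
  by right; exists 0, a; have := PSA_small small PSA_a; lia.
move: PSA_a; rewrite /PSA /pA big /=.
have [s1 | s_neq1] := eqVneq s 1.
  by rewrite s1 => -[u [_ ->]]; left; lia.
have [t1 | t_neq1] := eqVneq t 1 => /=.
  by rewrite t1 minn0 => -[u [_ ->]]; left; lia.
rewrite -mulnA mulnBr1 => -[[l [w [lt_l [lt_w ->]]]] | [u]].
  by right; exists l, (t * s + w); lia.
have [_ [_ ->] | lt_q [le_u ->]] := leqP (t - 1) ((z - 1) %/ (t * s - t)).
  by left; lia.
right; exists ((z - 1) %/ (t * s - t)), (t * s + u); split; first lia.
have : t < t * s by rewrite ltn_Pmulr; lia.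
have := @ltn_pmod (z - 1) (t * s - t); have := divn_eq (z - 1) (t * s - t).
lia.
Qed.

Lemma PSB_residue b : PSB s t z b ->
  t * s + th * (t - 1) <= b \/
  exists q r, b = th * q + r /\ t * s <= r /\ r + z <= th - t.
Proof.
rewrite /PSB /pB; have tauE : tau s t = th - t * s - t by [].
case: ifP => [_ [r [_ ->]] | /negbT]; first by left; lia.
rewrite !negb_or -leqNgt => /and3P [le_z_tau _ _].
case: ifP => [_ | /negbT small_z [v [le_v ->]]]; last first.
  by right; exists 0, (t * s + v); lia.
case=> [[d [l [le_d [_ ->]]]] | [v]]; first by right; exists l, (t * s + d); lia.
have [_ [_ ->] | lt_q [le_v ->]] := leqP (t - 1) ((z - 1) %/ (tau s t - z + 1)).
  by left; lia.
right; exists ((z - 1) %/ (tau s t - z + 1)), (t * s + v); split; first lia.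
have := @ltn_pmod (z - 1) (tau s t - z + 1).
have := divn_eq (z - 1) (tau s t - z + 1).
lia.
Qed.

Lemma sumset_PSA_PCB_clear x :
  in_sumset (PSA s t z) (PCB s t) x -> clear_of_products x.
Proof.
case=> a [b [PSA_a [PCB_b ->]]].
have [top | [q [r [-> r_win]]]] := PSA_residue PSA_a; first by left; lia.
have [q' [r' [-> le_r']]] := PCB_residue PCB_b.
by right; exists (q + q'), (r + r'); rewrite mulnDr; lia.
Qed.

Lemma sumset_PSA_PSB_clear x :
  in_sumset (PSA s t z) (PSB s t z) x -> clear_of_products x.
Proof.
case=> a [b [PSA_a [PSB_b ->]]].
have [top | [q [r [-> r_win]]]] := PSB_residue PSB_b; first by left; lia.
have /PSA_small/(_ PSA_a) a_win : z <= t * s - t by lia.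
by right; exists q, (a + r); lia.
Qed.

Lemma sumset_PSB_PCA_clear x :
  in_sumset (PSB s t z) (PCA s t) x -> clear_of_products x.
Proof.
case=> b [c [PSB_b [PCA_c ->]]].
have [top | [q [r [-> r_win]]]] := PSB_residue PSB_b; first by left; lia.
by have := PCA_lt PCA_c; right; exists q, (r + c); lia.
Qed.

End Exponents.

Theorem theorem1 (s t z : nat) :
  0 < s -> 0 < t -> 0 < z ->
  forall i l, i < t -> l < t ->
    let n := i + t * (s - 1) + t * l * (2 * s - 1) in
    ~ in_sumset (PSA s t z) (PCB s t) n /\
    ~ in_sumset (PSA s t z) (PSB s t z) n /\
    ~ in_sumset (PSB s t z) (PCA s t) n.
Proof.
move=> s_gt0 t_gt0 z_gt0 i l lt_i lt_l n.
have not_clear := product_exponent_not_clear s_gt0 t_gt0 lt_i lt_l.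
split; [|split].
- by move/(sumset_PSA_PCB_clear s_gt0 t_gt0 z_gt0).
- by move/(sumset_PSA_PSB_clear s_gt0 t_gt0 z_gt0).
- by move/(sumset_PSB_PCA_clear s_gt0 t_gt0 z_gt0).
Qed.
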